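(* Let $W$ be a (1-safe) DAW-net and $\mathrm{bc}(W)$ its $\mathcal{BC}$ encoding. For any $\ell\ge0$, if $\rho=(M_0,\eta_0)\xrightarrow{t_0}(M_1,\eta_1)\xrightarrow{t_1}\cdots\xrightarrow{t_{\ell-1}}(M_\ell,\eta_\ell)$ is a sequence of valid firings of $W$ of length $\ell$ with $(M_0,\eta_0)=(M_s,\eta_s)$ the initial state, then $\bigcup_{i=0}^{\ell}\Phi_i(\rho)$ is a stable model of $P_\ell(\mathrm{bc}(W))$.
   Context: **DAW-nets.** Data model $\mathcal{D}=(\mathcal{V},\Delta,\mathrm{dm},\mathrm{ord})$: variables, finite domains $\Delta_i$ assigned by total surjective $\mathrm{dm}$, partial orders $\le_{\Delta_i}$ on some domains. Assignments: partial $\eta$ with $\eta(v)\in\mathrm{dm}(v)$. Guards $\Phi::=\mathit{true}\mid\mathrm{def}(v)\mid t_1=t_2\mid t_1\le t_2\mid\neg\Phi\mid\Phi\wedge\Phi$ ($t_i$ variables or constants), with $t[\eta]=\eta(t)$ for variables on which $\eta$ is defined and $t$ otherwise: $\mathrm{def}(v)$ iff $\eta(v)$ defined; $t_1=t_2$ iff $t_1[\eta],t_2[\eta]$ are constants and equal; $t_1\le t_2$ iff both lie in some ordered $\Delta_i$ and $t_1[\eta]\le_{\Delta_i}t_2[\eta]$. A DAW-net $W=\langle\mathcal{D},(P,T,F),\mathrm{wr},\mathrm{gd}\rangle$ consists of a workflow Petri net with places $\mathit{start},\mathit{sink}$ (presets ${}^\bullet t$, postsets $t^\bullet$), partial functions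 $\mathrm{wr}(t)$ with $\mathrm{wr}(t)(v)\subseteq\mathrm{dm}(v)$, and guards $\mathrm{gd}(t)$. A firing $(M,\eta)\xrightarrow{t}(M',\eta')$ is valid iff $\{p\mid M(p)>0\}\supseteq{}^\bullet t$; $\mathcal{D},\eta\models\mathrm{gd}(t)$; $M'(p)=M(p)-1$ on ${}^\bullet t\setminus t^\bullet$, $M(p)+1$ on $t^\bullet\setminus{}^\bullet t$, else $M(p)$; $\mathrm{dom}(\eta')=\mathrm{dom}(\eta)\cup\{v\mid\mathrm{wr}(t)(v)\neq\emptyset\}\setminus\{v\mid\mathrm{wr}(t)(v)=\emptyset\}$, $\eta'(v)\in\mathrm{wr}(t)(v)$ for $v\in\mathrm{dom}(\mathrm{wr}(t))$, else $\eta'(v)=\eta(v)$. Initial state $(M_s,\eta_s)$: one token in $\mathit{start}$, none elsewhere, $\eta_s$ empty. $W$ is assumed 1-safe. $\mathcal{V}'$: finite set of variables of $W$; $\mathrm{adm}(v)=\bigcup_t\mathrm{wr}(t)(v)$. **$\mathcal{BC}$ semantics.** Fluents have finite domains; laws: dynamic ''$A_0$ after $A'_1,\dots,A'_n$ ifcons $A_{n+1},\dots,A_m$'' ($A_0$ an atom $f=v$ or false; $A'_j$ atoms or action constants), static ''$A_0$ if ... ifcons ...'', and ''initially $f=v$''. $P_\ell(B)$ is the disjunctive program with classical negation $\neg$ and default negation $\sim$ containing: each static law as $i{:}A_0\leftarrow i{:}A_1,\dots,i{:}A_n,\sim\neg(i{:}A_{n+1}),\dots,\sim\neg(i{:}A_m)$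 for $0\le i\le\ell$; each dynamic law as $i{+}1{:}A_0\leftarrow i{:}A'_1,\dots,i{:}A'_n,\sim\neg(i{+}1{:}A_{n+1}),\dots,\sim\neg(i{+}1{:}A_m)$ for $0\le i<\ell$ (a constraint if $A_0$ is false); the fact $0{:}f=v$ for each ''initially $f=v$''; $0{:}f=v\vee\neg(0{:}f=v)$ for all fluents and values; $i{:}a\vee\neg(i{:}a)$ for action constants and $i<\ell$; and for $i\le\ell$ and each fluent $f$ with domain $v_1,\dots,v_k$: $\leftarrow\sim(i{:}f=v_1),\dots,\sim(i{:}f=v_k)$ and $\neg(i{:}f=v)\leftarrow i{:}f=w$ for $v\neq w$. Stable models are answer sets. **The encoding $\mathrm{bc}(W)$.** Fluents $v\in\mathcal{V}'$ with domain $\mathrm{adm}(v)\cup\{\mathrm{null}\}$, Boolean fluents $p\in P$ and $\mathit{trans}$; action constants $t\in T$. Laws: ''$v=o$ after $v=o$ ifcons $v=o$'' ($o\in\mathrm{adm}(v)\cup\{\mathrm{null}\}$); ''$p=o$ after $p=o$ ifcons $p=o$'' ($o$ Boolean); for each $t$: ''$p=\mathrm{false}$ after $t$'' ($p\in{}^\bullet t\setminus t^\bullet$); ''$p=\mathrm{true}$ after $t$'' ($p\in t^\bullet\setminus{}^\bullet t$); ''$v=d$ after $t$ ifcons $v=d$'' ($d\in\mathrm{wr}(t)(v)$); ''$v=\mathrm{null}$ after $t$'' (if $\mathrm{wr}(t)(v)=\emptyset$); ''false after $t$ ifcons $v=d$'' (if $\mathrm{wr}(t)(v)\neq\emptyset$,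 $d\in\{\mathrm{null}\}\cup\mathrm{adm}(v)\setminus\mathrm{wr}(t)(v)$); ''false after $t,s$'' ($t\neq s$); ''false after $t,p=\mathrm{false}$'' ($p\in{}^\bullet t$); ''$\mathit{trans}=\mathrm{true}$ after $t$''; ''initially $\mathit{start}=\mathrm{true}$'', ''initially $p=\mathrm{false}$'' ($p\neq\mathit{start}$), ''initially $v=\mathrm{null}$'', ''initially $\mathit{trans}=\mathrm{true}$''. For each $t$ with $\mathrm{gd}(t)\not\equiv\mathit{true}$, for a chosen formula $\bigvee_{k}t^k_1\wedge\dots\wedge t^k_{n_k}$ equivalent over $\mathcal{D}$ to $\neg\mathrm{gd}(t)$ whose terms are $v=o$ or $\neg\mathrm{def}(v)$, the laws ''false after $t,[\![t^k_1]\!],\dots,[\![t^k_{n_k}]\!]$'', where $[\![v=o]\!]=(v=o)$ and $[\![\neg\mathrm{def}(v)]\!]=(v=\mathrm{null})$. **The sets $\Phi_i(\rho)$.** For $0\le i\le\ell$, $\Phi_i(\rho)=\Phi^\nu_i(\rho)\cup\Phi^\tau_i(\rho)$ where $\Phi^\nu_i(\rho)=\{i{:}p=\mathrm{true},\neg(i{:}p=\mathrm{false})\mid M_i(p)>0\}\cup\{i{:}p=\mathrm{false},\neg(i{:}p=\mathrm{true})\mid M_i(p)=0\}\cup\{i{:}v=o,\neg(i{:}v=\mathrm{null})\mid v\in\mathcal{V}',\eta_i(v)=o\}\cup\{i{:}v=\mathrm{null}\mid\eta_i(v)\text{ undefined}\}\cup\{\neg(i{:}v=o)\mid v\in\mathcal{V}',o\in\mathrm{adm}(v),\eta_i(v)\neq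 o\text{ or undefined}\}\cup\{i{:}\mathit{trans}=\mathrm{true},\neg(i{:}\mathit{trans}=\mathrm{false})\}$, and $\Phi^\tau_i(\rho)=\emptyset$ for $i\ge\ell$, $\{i{:}t_i\}\cup\{\neg(i{:}t)\mid t\in T,t\neq t_i\}$ for $i<\ell$. *)

From HB Require Import structures.
From Stdlib Require List.
From mathcomp Require Import all_boot.

Set Implicit Arguments.
Unset Strict Implicit.
Unset Printing Implicit Defensive.

Section DataModel.
Variables (V C Dom : finType).
(* V   : the (finite) set of variables of the data model
   C   : the (finite) universe of constants (union of all domains)
   Dom : the index set of the domains Delta_i                         *)

Record data_model := DataModel {
  Delta : Dom -> {set C};
  dm    : V -> Dom;
  ord   : Dom -> option (rel C) }.   (* partial order <=_{Delta_i}, on some domains *)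

Definition data_model_wf (D : data_model) : Prop :=
  (forall i : Dom, exists v : V, dm D v = i) /\
  (forall (i : Dom) (r : rel C), ord D i = Some r ->
     (forall a, a \in Delta D i -> r a a) /\
     (forall a b, a \in Delta D i -> b \in Delta D i -> r a b -> r b a -> a = b) /\
     (forall a b c, a \in Delta D i -> b \in Delta D i -> c \in Delta D i ->
        r a b -> r b c -> r a c)).

(* partial assignments: eta v = None means eta undefined on v *)
Definition assignment := V -> option C.

Definition assignment_ok (D : data_model) (eta : assignment) : Prop :=
  forall v c, eta v = Some c -> c \in Delta D (dm D v).

Inductive term := TVar of V | TConst of C.

Inductive guard :=
  | GTrue
  | GDef of V
  | GEq of term & term
  | GLe of term & term
  | GNeg of guard
  | GAnd of guard & guard.

Definition tval (eta : assignment) (t : term) : V + C :=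
  match t with
  | TVar v => if eta v is Some c then inr c else inl v
  | TConst c => inr c
  end.

Fixpoint ghold (D : data_model) (eta : assignment) (g : guard) : bool :=
  match g with
  | GTrue => true
  | GDef v => eta v != None
  | GEq t1 t2 =>
      match tval eta t1, tval eta t2 with
      | inr a, inr b => a == b
      | _, _ => false
      end
  | GLe t1 t2 =>
      match tval eta t1, tval eta t2 with
      | inr a, inr b =>
          [exists i : Dom,
             if ord D i is Some r then [&& a \in Delta D i, b \in Delta D i & r a b]
             else false]
      | _, _ => false
      end
  | GNeg g1 => ~~ ghold D eta g1
  | GAnd g1 g2 => ghold D eta g1 && ghold D eta g2
  end.

(* terms allowed in the chosen DNF of the negated guard: v = o, or ~def(v) *)
Inductive dlit := DEq of V & C | DUndef of V.

Definition dlit_hold (eta : assignment) (x : dlit) : bool :=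
  match x with
  | DEq v c => eta v == Some c
  | DUndef v => eta v == None
  end.

Definition dnf_hold (eta : assignment) (phi : seq (seq dlit)) : bool :=
  has (fun cj => all (dlit_hold eta) cj) phi.

End DataModel.

Section DAWNet.
Variables (V C Dom P T : finType).

Record dawnet := DAWNet {
  dmod  : data_model V C Dom;
  Fin   : P -> T -> bool;                (* (p,t) \in F *)
  Fout  : T -> P -> bool;                (* (t,p) \in F *)
  start : P;
  sink  : P;
  wr    : T -> V -> option {set C};      (* partial: None = v not in dom(wr t) *)
  gd    : T -> guard V C }.

Definition fedge (W : dawnet) : rel (P + T) := fun x y =>
  match x, y with
  | inl p, inr t => Fin W p t
  | inr t, inl p => Fout W t p
  | _, _ => false
  end.

Definition workflow_net (W : dawnet) : Prop :=
  (forall t, ~~ Fout W t (start W)) /\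
  (forall t, ~~ Fin W (sink W) t) /\
  (forall x : P + T, connect (fedge W) (inl (start W)) x /\ connect (fedge W) x (inl (sink W))).

Definition dawnet_wf (W : dawnet) : Prop :=
  data_model_wf (dmod W) /\ workflow_net W /\
  (forall t v s, wr W t v = Some s -> {subset s <= Delta (dmod W) (dm (dmod W) v)}).

Definition marking := P -> nat.
Definition state := (marking * assignment V C)%type.

Definition fire (W : dawnet) (s : state) (t : T) (s' : state) : Prop :=
  let: (M, eta) := s in
  let: (M', eta') := s' in
  (forall p, Fin W p t -> 0 < M p) /\
  ghold (dmod W) eta (gd W t) /\
  (forall p, M' p = if Fin W p t && ~~ Fout W t p then (M p).-1
                    else if Fout W t p && ~~ Fin W p t then (M p).+1
                    else M p) /\
  (forall v, match wr W t v with
             | None => eta' v = eta v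
             | Some s => if s == set0 then eta' v = None
                         else exists2 c, c \in s & eta' v = Some c
             end).

Definition init_state (W : dawnet) : state :=
  (fun p => if p == start W then 1 else 0, fun _ => None).

Definition run (W : dawnet) (st : nat -> state) (ts : nat -> T) (l : nat) : Prop :=
  st 0 = init_state W /\ forall i, i < l -> fire W (st i) (ts i) (st i.+1).

Definition reachable (W : dawnet) (s : state) : Prop :=
  exists st ts l, run W st ts l /\ st l = s.

Definition one_safe (W : dawnet) : Prop :=
  forall s, reachable W s -> forall p, s.1 p <= 1.

Definition neg_guard_choice (W : dawnet) (ngd : T -> option (seq (seq (dlit V C)))) : Prop :=
  forall t,
    (ngd t = None <->
       forall eta, assignment_ok (dmod W) eta -> ghold (dmod W) eta (gd W t)) /\
    (forall phi, ngd t = Some phi ->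
       forall eta, assignment_ok (dmod W) eta ->
         dnf_hold eta phi = ~~ ghold (dmod W) eta (gd W t)).

Definition adm (W : dawnet) (v : V) : {set C} :=
  \bigcup_(t : T) odflt set0 (wr W t v).

End DAWNet.

Section BC.
Variables (F A : Type) (Val : eqType).

Inductive batom := BFl of F & Val | BAct of A.

(* laws: (head (None = false), after/if-body, ifcons-body) *)

Record bc_desc := BCDesc {
  fdom         : F -> seq Val;
  static_laws  : seq (option (F * Val) * seq (F * Val) * seq (F * Val));
  dynamic_laws : seq (option (F * Val) * seq batom * seq (F * Val));
  init_laws    : seq (F * Val) }.

Inductive gatom := GF of nat & F & Val | GA of nat & A.
(* literals: atom or its classical negation *)
Inductive glit := Pos of gatom | Neg of gatom.

(* head: disjunction; rpos: positive body; rnaf: default-negated body *)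
Record rule := Rule { rhead : seq glit; rpos : seq glit; rnaf : seq glit }.

Definition program := rule -> Prop.
Definition lits := glit -> Prop.

Definition gbatom (i : nat) (a : batom) : gatom :=
  match a with BFl f v => GF i f v | BAct x => GA i x end.

Definition ohead (i : nat) (h : option (F * Val)) : seq glit :=
  if h is Some fv then [:: Pos (GF i fv.1 fv.2)] else [::].

Definition prog (B : bc_desc) (l : nat) : program := fun r =>
  (exists h b c i, List.In (h, b, c) (static_laws B) /\ i <= l /\
     r = Rule (ohead i h) [seq Pos (GF i fv.1 fv.2) | fv <- b]
                          [seq Neg (GF i fv.1 fv.2) | fv <- c])
  \/ (exists h b c i, List.In (h, b, c) (dynamic_laws B) /\ i < l /\
     r = Rule (ohead i.+1 h) [seq Pos (gbatom i a) | a <- b]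
                             [seq Neg (GF i.+1 fv.1 fv.2) | fv <- c])
  \/ (exists f v, List.In (f, v) (init_laws B) /\
     r = Rule [:: Pos (GF 0 f v)] [::] [::])
  \/ (exists f v, v \in fdom B f /\
     r = Rule [:: Pos (GF 0 f v); Neg (GF 0 f v)] [::] [::])
  \/ (exists a i, i < l /\
     r = Rule [:: Pos (GA i a); Neg (GA i a)] [::] [::])
  \/ (exists f i, i <= l /\
     r = Rule [::] [::] [seq Pos (GF i f v) | v <- fdom B f])
  \/ (exists f v w i, i <= l /\ v \in fdom B f /\ w \in fdom B f /\ v <> w /\
     r = Rule [:: Neg (GF i f v)] [:: Pos (GF i f w)] [::]).

Definition consistent (S : lits) : Prop := forall a, ~ (S (Pos a) /\ S (Neg a)).

(* X is closed under the Gelfond-Lifschitz reduct Pi^S *)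
Definition closed_reduct (Pi : program) (S X : lits) : Prop :=
  forall r, Pi r ->
    (forall x, List.In x (rnaf r) -> ~ S x) ->
    (forall x, List.In x (rpos r) -> X x) ->
    exists x, List.In x (rhead r) /\ X x.

Definition stable_model (Pi : program) (S : lits) : Prop :=
  consistent S /\ closed_reduct Pi S S /\
  forall X : lits, (forall x, X x -> S x) -> closed_reduct Pi S X -> forall x, S x -> X x.

End BC.

Arguments BFl {F A Val}.
Arguments BAct {F A Val}.
Arguments GF {F A Val}.
Arguments GA {F A Val}.
Arguments Pos {F A Val}.
Arguments Neg {F A Val}.

Section Encoding.
Variables (V C Dom P T : finType).

Definition bval := (option C + bool)%type.          (* null | constant | Boolean *)
Definition bflu := (V + (P + unit))%type.           (* data var | place | trans *)
Definition vnull : bval := inl None.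
Definition vc (c : C) : bval := inl (Some c).
Definition vb (b : bool) : bval := inr b.
Definition fvar (v : V) : bflu := inl v.
Definition fplace (p : P) : bflu := inr (inl p).
Definition ftrans : bflu := inr (inr tt).

Definition bbatom := batom bflu T bval.
Definition dlaw := (option (bflu * bval) * seq bbatom * seq (bflu * bval))%type.

Variable W : dawnet V C Dom P T.
Variable ngd : T -> option (seq (seq (dlit V C))).

Definition bc_fdom (f : bflu) : seq bval :=
  match f with
  | inl v => vnull :: [seq vc c | c <- enum (adm W v)]
  | inr _ => [:: vb true; vb false]
  end.

Definition tr_dlit (x : dlit V C) : bbatom :=
  match x with
  | DEq v c => BFl (fvar v) (vc c)
  | DUndef v => BFl (fvar v) vnull
  end.

Definition bc_trans_laws (t : T) : seq dlaw :=
  [seq (Some (fplace p, vb false), [:: BAct t], [::]) | p <- enum P & Fin W p t && ~~ Fout W t p]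
  ++ [seq (Some (fplace p, vb true), [:: BAct t], [::]) | p <- enum P & Fout W t p && ~~ Fin W p t]
  ++ flatten [seq [seq (Some (fvar v, vc d), [:: BAct t], [:: (fvar v, vc d)])
                  | d <- enum (odflt set0 (wr W t v))] | v <- enum V]
  ++ [seq (Some (fvar v, vnull), [:: BAct t], [::]) | v <- enum V & wr W t v == Some set0]
  ++ flatten [seq (match wr W t v with
                   | Some s =>
                       if s != set0 then
                         (None, [:: BAct t], [:: (fvar v, vnull)])
                         :: [seq (None, [:: BAct t], [:: (fvar v, vc d)])
                            | d <- enum (adm W v :\: s)]
                       else [::]
                   | None => [::]
                   end : seq dlaw) | v <- enum V]
  ++ [seq (None, [:: BAct t; BAct s], [::]) | s <- enum T & s != t]
  ++ [seq (None, [:: BAct t; BFl (fplace p) (vb false)], [::]) | p <- enum P & Fin W p t]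
  ++ [:: (Some (ftrans, vb true), [:: BAct t], [::])]
  ++ (match ngd t with
      | Some phi => [seq (None, BAct t :: [seq tr_dlit x | x <- cj], [::]) | cj <- phi]
      | None => [::]
      end : seq dlaw).

Definition bc_dynamic : seq dlaw :=
  [seq (Some (fvar v, o), [:: BFl (fvar v) o], [:: (fvar v, o)])
  | v <- enum V, o <- bc_fdom (fvar v)]
  ++ [seq (Some (fplace p, vb b), [:: BFl (fplace p) (vb b)], [:: (fplace p, vb b)])
     | p <- enum P, b <- [:: true; false]]
  ++ flatten [seq bc_trans_laws t | t <- enum T].

Definition bc_init : seq (bflu * bval) :=
  (fplace (start W), vb true)
  :: [seq (fplace p, vb false) | p <- enum P & p != start W]
  ++ [seq (fvar v, vnull) | v <- enum V]
  ++ [:: (ftrans, vb true)].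

Definition bc : bc_desc bflu T bval :=
  BCDesc bc_fdom [::] bc_dynamic bc_init.

Definition Phi_nu (st : nat -> state V C P) (i : nat) (x : glit bflu T bval) : Prop :=
  let M := (st i).1 in let eta := (st i).2 in
  (exists p, 0 < M p /\ (x = Pos (GF i (fplace p) (vb true)) \/ x = Neg (GF i (fplace p) (vb false))))
  \/ (exists p, M p = 0 /\ (x = Pos (GF i (fplace p) (vb false)) \/ x = Neg (GF i (fplace p) (vb true))))
  \/ (exists v o, eta v = Some o /\ (x = Pos (GF i (fvar v) (vc o)) \/ x = Neg (GF i (fvar v) vnull)))
  \/ (exists v, eta v = None /\ x = Pos (GF i (fvar v) vnull))
  \/ (exists v o, o \in adm W v /\ eta v != Some o /\ x = Neg (GF i (fvar v) (vc o)))
  \/ x = Pos (GF i ftrans (vb true))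
  \/ x = Neg (GF i ftrans (vb false)).

Definition Phi_tau (ts : nat -> T) (l i : nat) (x : glit bflu T bval) : Prop :=
  i < l /\ (x = Pos (GA i (ts i)) \/ exists t, t != ts i /\ x = Neg (GA i t)).

Definition Phi (st : nat -> state V C P) (ts : nat -> T) (l i : nat) : lits bflu T bval :=
  fun x => Phi_nu st i x \/ Phi_tau ts l i x.

Definition Phi_union (st : nat -> state V C P) (ts : nat -> T) (l : nat) : lits bflu T bval :=
  fun x => exists i, i <= l /\ Phi st ts l i x.

End Encoding.

From Pilot Require Import Defs.
From HB Require Import structures.
From Stdlib Require List.
From mathcomp Require Import all_boot.

Set Implicit Arguments.
Unset Strict Implicit.
Unset Printing Implicit Defensive.

(* A run of W determines a complete trajectory of bc(W): at each time i every
   fluent has exactly one value (the current value of a variable or null,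
   whether a place is marked, trans = true), and for i < l exactly one action,
   the fired transition, occurs.  The union of the Phi_i is precisely the set of
   literals of this trajectory.  For any BC description, the literal set of a
   trajectory is a stable model of P_l as soon as every law holds along the
   trajectory (which gives closure under the reduct) and every value at time
   i+1 is produced by a dynamic law whose body holds at step i.  Minimality is
   then an induction on time: values at time 0 and all actions are forced by
   the choice rules, later values by their supporting law, and the classically
   negated literals by the rules ¬(i:f=v) ← i:f=w.
   For bc(W) a valid firing satisfies every law of the fired transition
   (1-safety empties a consumed place, and the chosen DNF of the negated guard
   fails because the guard holds), and every new value is supported by an
   effect law of the fired transition or by an inertia law. *)

Lemma In_mem (T : eqType) (x : T) (s : seq T) : List.In x s <-> x \in s.
Proof.
elim: s => [|y s IH] //=; rewrite in_cons.
by split=> [[->|/IH->]|/orP[/eqP->|/IH]]; rewrite ?eqxx ?orbT; auto.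
Qed.

Lemma stable_model_ext (F A : Type) (Val : eqType) (Pi : program F A Val)
    (S S' : lits F A Val) :
  (forall x, S x <-> S' x) -> stable_model Pi S -> stable_model Pi S'.
Proof.
move=> SS' [cons [closed minimal]].
have closed_ext X : closed_reduct Pi S X <-> closed_reduct Pi S' X.
  by split=> cl r Hr naf; apply: (cl r Hr) => x /naf nS /SS'.
split; first by move=> a [/SS' pa /SS' na]; apply: (cons a).
split.
  move=> r Hr naf pos.
  have [x [hx Sx]] := (closed_ext S).1 closed r Hr naf (fun x px => (SS' x).2 (pos x px)).
  by exists x; split; [|apply/SS'].
move=> X XS' clX x /SS' Sx.
exact: (minimal X (fun y Xy => (SS' y).2 (XS' y Xy)) ((closed_ext X).2 clX)).
Qed.

Section Trajectory.
Variables (F : Type) (A Val : eqType) (B : bc_desc F A Val).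
Variables (l : nat) (val : nat -> F -> Val) (act : nat -> A).

Definition trajectory_lits : lits F A Val := fun x =>
  match x with
  | Pos (GF i f x) => i <= l /\ x = val i f
  | Neg (GF i f x) => [/\ i <= l, x \in fdom B f & x != val i f]
  | Pos (GA i a) => i < l /\ a = act i
  | Neg (GA i a) => i < l /\ a != act i
  end.

Local Notation S := trajectory_lits.

Definition batom_holds (now : F -> Val) (a : A) (x : batom F A Val) : Prop :=
  match x with BFl f y => now f = y | BAct b => a = b end.

(* "ifcons f = x" becomes the body literal ∼¬(f = x) of P_l, which holds unless
   x is a domain value other than the current one. *)
Definition ifcons_holds (now : F -> Val) (fx : F * Val) : Prop :=
  fx.2 \in fdom B fx.1 -> now fx.1 = fx.2.

Definition head_holds (now : F -> Val) (h : option (F * Val)) : Prop :=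
  if h is Some (f, x) then now f = x else False.

Definition static_law_holds (now : F -> Val)
    (law : option (F * Val) * seq (F * Val) * seq (F * Val)) : Prop :=
  let: (h, b, c) := law in
  (forall fx, List.In fx b -> now fx.1 = fx.2) ->
  (forall fx, List.In fx c -> ifcons_holds now fx) -> head_holds now h.

Definition transition_law_holds (now next : F -> Val) (a : A)
    (law : option (F * Val) * seq (batom F A Val) * seq (F * Val)) : Prop :=
  let: (h, b, c) := law in
  (forall x, List.In x b -> batom_holds now a x) ->
  (forall fx, List.In fx c -> ifcons_holds next fx) -> head_holds next h.

Definition transition_supported (now next : F -> Val) (a : A) (f : F) : Prop :=
  exists b c, [/\ List.In (Some (f, next f), b, c) (dynamic_laws B),
    forall x, List.In x b -> batom_holds now a x &
    forall fx, List.In fx c -> ifcons_holds next fx].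

Lemma inertia_law_holds now next a f x b :
  x \in fdom B f -> transition_law_holds now next a (Some (f, x), b, [:: (f, x)]).
Proof. by move=> xf _ /(_ _ (or_introl erefl)); apply. Qed.

Lemma supported_by_action now next a f x c :
  next f = x -> List.In (Some (f, x), [:: BAct a], c) (dynamic_laws B) ->
  (forall fx, List.In fx c -> ifcons_holds next fx) ->
  transition_supported now next a f.
Proof. by move=> <- law ifc; exists [:: BAct a], c; split=> // _ [<-|[]]. Qed.

Lemma supported_by_inertia now next a f :
  next f = now f ->
  List.In (Some (f, now f), [:: BFl f (now f)], [:: (f, now f)]) (dynamic_laws B) ->
  transition_supported now next a f.
Proof.
move=> nf law; exists [:: BFl f (now f)], [:: (f, now f)].
by rewrite nf; split=> // _ [<-|[]].
Qed.

Lemma trajectory_lits_consistent : consistent S.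
Proof.
by case=> [i f x|i a] /= [[_ ->]]; [case=> _ _ /eqP | case=> _ /eqP].
Qed.

Lemma trajectory_lits_naf i fx :
  i <= l -> ~ S (Neg (GF i fx.1 fx.2)) <-> ifcons_holds (val i) fx.
Proof.
move=> il; split=> [nS xf | hold [_ xf]].
  by apply/eqP; apply: contraT; rewrite eq_sym => ne; case: nS.
by rewrite (hold xf) eqxx.
Qed.

Lemma trajectory_lits_body i x :
  i < l -> S (Pos (gbatom i x)) <-> batom_holds (val i) (act i) x.
Proof.
by move=> il; case: x => [f x|b] /=; split=> [[_ ->]|<-] //; split=> //; apply: ltnW.
Qed.

Hypothesis val_in_fdom : forall i f, i <= l -> val i f \in fdom B f.
Hypothesis static_laws_hold : forall law i,
  List.In law (static_laws B) -> i <= l -> static_law_holds (val i) law.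
Hypothesis dynamic_laws_hold : forall law i,
  List.In law (dynamic_laws B) -> i < l -> transition_law_holds (val i) (val i.+1) (act i) law.
Hypothesis init_laws_hold : forall f x, List.In (f, x) (init_laws B) -> val 0 f = x.
Hypothesis values_supported :
  forall i f, i < l -> transition_supported (val i) (val i.+1) (act i) f.

Lemma trajectory_lits_closed : closed_reduct (prog B l) S S.
Proof.
have naf i c : i <= l ->
    (forall x, List.In x [seq Neg (GF i fx.1 fx.2) | fx <- c] -> ~ S x) ->
    forall fx, List.In fx c -> ifcons_holds (val i) fx.
  move=> il nS fx /(List.in_map (fun fx => Neg (GF i fx.1 fx.2))) /nS.
  by move/(trajectory_lits_naf _ il).
have head i h : i <= l -> head_holds (val i) h ->
    exists x, List.In x (Defs.ohead A i h) /\ S x.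
  by case: h => [[f x]|] //= il <-; exists (Pos (GF i f (val i f))); split; [left|].
move=> r; case=> [Hr|[Hr|[Hr|[Hr|[Hr|[Hr|Hr]]]]]].
- case: Hr => h [b [c [i [law [il ->]]]]] /= nS posS.
  apply: (head _ _ il (static_laws_hold law il _ (naf i c il nS))) => fx bfx.
  by have [] := posS _ (List.in_map (fun fx => Pos (GF i fx.1 fx.2)) _ _ bfx).
- case: Hr => h [b [c [i [law [il ->]]]]] /= nS posS.
  apply: (head _ _ il (dynamic_laws_hold law il _ (naf i.+1 c il nS))) => a ba.
  exact/(trajectory_lits_body _ il)/posS/(List.in_map (fun a => Pos (gbatom i a))).
- case: Hr => f [x [/init_laws_hold <- ->]] _ _.
  by exists (Pos (GF 0 f (val 0 f))); split; [left|].
- case: Hr => f [x [xf ->]] _ _.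
  have [-> | ne] := eqVneq x (val 0 f).
    by exists (Pos (GF 0 f (val 0 f))); split; [left|].
  by exists (Neg (GF 0 f x)); split; [right; left|].
- case: Hr => a [i [il ->]] _ _.
  have [-> | ne] := eqVneq a (act i).
    by exists (Pos (GA i (act i))); split; [left|].
  by exists (Neg (GA i a)); split; [right; left|].
- case: Hr => f [i [il ->]] /= nS _; exfalso.
  apply: (nS (Pos (GF i f (val i f)))) => //.
  exact/(List.in_map (fun x => Pos (GF i f x)))/(In_mem _ _).2/val_in_fdom.
- case: Hr => f [x [y [i [il [xf [_ [ne ->]]]]]]] /= _ posS.
  have [_ yv] := posS _ (or_introl erefl).
  by exists (Neg (GF i f x)); split; [left | split=> //; rewrite -yv; apply/eqP].
Qed.

Lemma trajectory_lits_minimal (X : lits F A Val) :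
  (forall x, X x -> S x) -> closed_reduct (prog B l) S X -> forall x, S x -> X x.
Proof.
move=> XS closedX.
have decided a x : x = Pos a \/ x = Neg a -> S x -> X (Pos a) \/ X (Neg a) -> X x.
  move=> [->|->] Sx [] // /XS Sy; case: (trajectory_lits_consistent (a := a)); by split.
have choice_rule a : prog B l (Rule [:: Pos a; Neg a] [::] [::]) -> X (Pos a) \/ X (Neg a).
  move/closedX => /(_ (fun _ => False_ind _) (fun _ => False_ind _)).
  by case=> x [[<-|[<-|[]]] Xx]; [left|right].
have derive h pos neg : prog B l (Rule [:: h] pos neg) ->
    (forall x, List.In x neg -> ~ S x) -> (forall x, List.In x pos -> X x) -> X h.
  by move=> /closedX Hr /Hr {}Hr /Hr [x [[<-|[]]]].
have action_in i a x : i < l -> x = Pos (GA i a) \/ x = Neg (GA i a) -> S x -> X x.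
  move=> il ax Sx; apply: decided ax Sx (choice_rule _ _).
  by do 4 right; left; exists a, i.
have fluent_in i : i <= l -> forall f, X (Pos (GF i f (val i f))).
  elim: i => [|i IH] il f.
    apply: (decided _ _ (or_introl erefl)) => //; apply: choice_rule.
    by do 3 right; left; exists f, (val 0 f); split=> //; apply: val_in_fdom.
  have [b [c [law body ifc]]] := values_supported f il.
  have law_rule : prog B l (Rule [:: Pos (GF i.+1 f (val i.+1 f))]
      [seq Pos (gbatom i a) | a <- b] [seq Neg (GF i.+1 fx.1 fx.2) | fx <- c]).
    by right; left; exists (Some (f, val i.+1 f)), b, c, i.
  apply: (derive _ _ _ law_rule).
    move=> _ /List.in_map_iff [fx [<- cfx]].
    exact/(trajectory_lits_naf _ il)/ifc.
  move=> _ /List.in_map_iff [[g y|a] [<- /body /= yv]].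
    by rewrite -yv; apply: IH; apply: ltnW.
  by apply: (action_in i a _ il (or_introl erefl)); split.
case=> [[i f x|i a]|[i f x|i a]] Sx.
- by case: Sx => il ->; apply: fluent_in.
- by apply: (action_in i a _ Sx.1 (or_introl erefl)).
- case: Sx => il xf ne.
  have neg_rule : prog B l (Rule [:: Neg (GF i f x)] [:: Pos (GF i f (val i f))] [::]).
    do 6 right; exists f, x, (val i f), i.
    by do !split=> //; [apply: val_in_fdom | apply/eqP].
  by apply: (derive _ _ _ neg_rule) => // _ [<-|[]]; apply: fluent_in.
- by apply: (action_in i a _ Sx.1 (or_intror erefl)).
Qed.

Theorem trajectory_lits_stable : stable_model (prog B l) S.
Proof.
split; first exact: trajectory_lits_consistent.
split; first exact: trajectory_lits_closed.
exact: trajectory_lits_minimal.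
Qed.

End Trajectory.

Section BatomEq.
Variables (F A Val : eqType).

Definition batom_sum (x : batom F A Val) : (F * Val) + A :=
  match x with BFl f y => inl (f, y) | BAct b => inr b end.

Definition sum_batom (s : (F * Val) + A) : batom F A Val :=
  match s with inl (f, y) => BFl f y | inr b => BAct b end.

Lemma batom_sumK : cancel batom_sum sum_batom. Proof. by case. Qed.

HB.instance Definition _ := Equality.copy (batom F A Val) (can_type batom_sumK).

End BatomEq.

Section Encoding.
Variables (V C Dom P T : finType) (W : dawnet V C Dom P T).

Local Notation fvar := (@fvar V P).
Local Notation fplace := (@fplace V P).
Local Notation ftrans := (Defs.ftrans V P).
Local Notation vnull := (vnull C).
Local Notation vb := (vb C).

Definition fluent_val (s : state V C P) (f : bflu V P) : bval C :=
  match f with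
  | inl v => if s.2 v is Some c then vc c else vnull
  | inr (inl p) => vb (0 < s.1 p)
  | inr (inr _) => vb true
  end.

Lemma adm_subset_Delta v :
  dawnet_wf W -> {subset adm W v <= Delta (dmod W) (dm (dmod W) v)}.
Proof.
case=> _ [_ wrD] c /bigcupP [t _]; case E: (wr W t v) => [w|] /=.
  exact: wrD E c.
by rewrite inE.
Qed.

Lemma vc_in_fdom v c : c \in adm W v -> vc c \in bc_fdom W (fvar v).
Proof. by move=> cv; rewrite in_cons map_f ?orbT // mem_enum. Qed.

Lemma fluent_val_fdom s f :
  (forall v c, s.2 v = Some c -> c \in adm W v) -> fluent_val s f \in bc_fdom W f.
Proof.
move=> sadm; case: f => [v|[p|[]]] //=; last by case: (0 < _).
by case E: (s.2 v) => [c|]; [apply/vc_in_fdom/sadm/E | rewrite in_cons eqxx].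
Qed.

Lemma fire_enabled s t s' : fire W s t s' ->
  (forall p, Fin W p t -> 0 < s.1 p) /\ ghold (dmod W) s.2 (gd W t).
Proof. by case: s s' => M eta [M' eta'] [pre [g _]]. Qed.

Lemma fire_marked s t s' p : fire W s t s' -> s.1 p <= 1 ->
  (0 < s'.1 p) = if Fin W p t && ~~ Fout W t p then false
                 else if Fout W t p && ~~ Fin W p t then true
                 else 0 < s.1 p.
Proof.
case: s s' => M eta [M' eta'] [pre [_ [post _]]] /= safe; rewrite post.
case: ifP => [/andP[/pre pos _] | _]; first by case: (M p) pos safe => [|[|]].
by case: ifP.
Qed.

Lemma fire_var s t s' v : fire W s t s' ->
  match wr W t v with
  | None => s'.2 v = s.2 v
  | Some w => if w == set0 then s'.2 v = None else exists2 c, c \in w & s'.2 v = Some c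
  end.
Proof. by case: s s' => M eta [M' eta'] [_ [_ [_ /(_ v)]]]. Qed.

Variable ngd : T -> option (seq (seq (dlit V C))).

Lemma tr_dlit_holds s t x :
  batom_holds (fluent_val s) t (tr_dlit P T x) <-> dlit_hold s.2 x.
Proof.
by case: x => [v c|v] /=; case: (s.2 v) => [c'|]; split=> // [[->]|/eqP[->]].
Qed.

Lemma bc_trans_law_acts t law :
  law \in bc_trans_laws W ngd t -> List.In (BAct t) law.1.2.
Proof.
rewrite !mem_cat => /or4P[| | |/or4P[| | |/or3P[| |]]].
- by move=> /mapP[p _ ->]; left.
- by move=> /mapP[p _ ->]; left.
- by case/flatten_mapP=> v _ /mapP[d _ ->]; left.
- by move=> /mapP[p _ ->]; left.
- case/flatten_mapP=> v _; case: (wr W t v) => [w|] //.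
  by case: ifP => // _; rewrite in_cons => /orP[/eqP->|/mapP[d _ ->]]; left.
- by move=> /mapP[p _ ->]; left.
- by move=> /mapP[p _ ->]; left.
- by rewrite mem_seq1 => /eqP->; left.
- case: (ngd t) => [phi|] //= /In_mem /List.in_map_iff [cj [<- _]].
  by left.
Qed.

Hypothesis hngd : neg_guard_choice W ngd.

Lemma bc_trans_law_holds s t s' law :
  fire W s t s' -> (forall p, s.1 p <= 1) -> assignment_ok (dmod W) s.2 ->
  law \in bc_trans_laws W ngd t ->
  transition_law_holds (bc W ngd) (fluent_val s) (fluent_val s') t law.
Proof.
move=> fired safe ok; have [pre guard] := fire_enabled fired.
rewrite !mem_cat => /or4P[| | |/or4P[| | |/or3P[| |]]].
- move=> /mapP[p]; rewrite mem_filter => /andP[cons _] -> _ _ /=.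
  by rewrite (fire_marked fired (safe p)) cons.
- move=> /mapP[p]; rewrite mem_filter => /andP[/andP[out nin] _] -> _ _ /=.
  by rewrite (fire_marked fired (safe p)) (negbTE nin) out.
- case/flatten_mapP=> v _ /mapP[d dw ->]; apply/inertia_law_holds/vc_in_fdom.
  by apply/bigcupP; exists t; rewrite // -mem_enum.
- move=> /mapP[v]; rewrite mem_filter => /andP[/eqP w0 _] -> _ _ /=.
  by have := fire_var v fired; rewrite w0 eqxx => ->.
- case/flatten_mapP=> v _; have := fire_var v fired.
  case: (wr W t v) => [w|] //; case: (w == set0) => //= -[c cw s'c].
  rewrite in_cons => /orP[/eqP-> | /mapP[d]] /=.
    move=> _ /(_ _ (or_introl erefl)).
    by rewrite /ifcons_holds /= s'c in_cons eqxx => /(_ isT).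
  rewrite mem_enum inE => /andP[dw dv] -> _ /(_ _ (or_introl erefl)).
  rewrite /ifcons_holds /= s'c => /(_ (vc_in_fdom dv)) [cd].
  by rewrite -cd cw in dw.
- move=> /mapP[s0]; rewrite mem_filter => /andP[ne _] -> /= body _.
  by have ts0 := body _ (or_intror (or_introl erefl)); rewrite ts0 eqxx in ne.
- move=> /mapP[p]; rewrite mem_filter => /andP[fin _] -> /= body _.
  by have := body _ (or_intror (or_introl erefl)); rewrite /= pre.
- by rewrite mem_seq1 => /eqP->.
- case E: (ngd t) => [phi|] //= /In_mem /List.in_map_iff [cj [<- cjphi]] /= body _.
  have cj_holds : all (dlit_hold s.2) cj.
    apply/List.forallb_forall => x cjx; apply/tr_dlit_holds.
    exact/body/or_intror/List.in_map.
  have : dnf_hold s.2 phi by apply/List.existsb_exists; exists cj.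
  by rewrite ((hngd t).2 phi E _ ok) guard.
Qed.

Lemma bc_init_holds f x :
  List.In (f, x) (init_laws (bc W ngd)) -> fluent_val (init_state W) f = x.
Proof.
move=> /In_mem; rewrite in_cons => /orP[/eqP[-> ->]|]; first by rewrite /= eqxx.
rewrite !mem_cat => /or3P[/mapP[p] | /mapP[v _ [-> ->]] // | ].
  by rewrite mem_filter => /andP[ps _] [-> ->] /=; rewrite (negbTE ps).
by rewrite mem_seq1 => /eqP[-> ->].
Qed.

Lemma bc_trans_law_dynamic t law :
  law \in bc_trans_laws W ngd t -> List.In law (dynamic_laws (bc W ngd)).
Proof.
move=> lawt; apply/In_mem; rewrite !mem_cat; do 2 (apply/orP; right).
by apply/flatten_mapP; exists t; rewrite ?mem_enum.
Qed.

Lemma bc_dynamic_law_holds s t s' law :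
  fire W s t s' -> (forall p, s.1 p <= 1) -> assignment_ok (dmod W) s.2 ->
  List.In law (dynamic_laws (bc W ngd)) ->
  transition_law_holds (bc W ngd) (fluent_val s) (fluent_val s') t law.
Proof.
move=> fired safe ok /In_mem; rewrite !mem_cat => /or3P[| |].
- by case/allpairsPdep=> v [o [_ ov ->]]; apply: inertia_law_holds.
- by case/allpairsPdep=> p [b [_ bb ->]]; apply: inertia_law_holds.
- case/flatten_mapP=> t' _; case: law => [[h b] c] lawt' body.
  have tt' : t = t' := body _ (bc_trans_law_acts lawt').
  by subst t'; apply: (bc_trans_law_holds fired safe ok lawt').
Qed.

Lemma bc_fire_supported s t s' f :
  fire W s t s' -> (forall p, s.1 p <= 1) ->
  (forall v c, s.2 v = Some c -> c \in adm W v) ->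
  transition_supported (bc W ngd) (fluent_val s) (fluent_val s') t f.
Proof.
move=> fired safe sadm.
have by_action x c : fluent_val s' f = x ->
    (Some (f, x), [:: BAct t], c) \in bc_trans_laws W ngd t ->
    (forall fx, List.In fx c -> ifcons_holds (bc W ngd) (fluent_val s') fx) ->
    transition_supported (bc W ngd) (fluent_val s) (fluent_val s') t f.
  by move=> s'f /bc_trans_law_dynamic; apply: supported_by_action.
case: f by_action => [v|[p|[]]] by_action.
- have := fire_var v fired; case E: (wr W t v) => [w|].
  + case: ifP => [w0 s'v | _ [c cw s'v]].
      apply: (by_action vnull [::]) => //; first by rewrite /= s'v.
      rewrite !mem_cat; do 3 (apply/orP; right); apply/orP; left.
      by apply/mapP; exists v; rewrite // mem_filter E (eqP w0) eqxx mem_enum.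
    apply: (by_action (vc c) [:: (fvar v, vc c)]); first by rewrite /= s'v.
      rewrite !mem_cat; do 2 (apply/orP; right); apply/orP; left.
      apply/flatten_mapP; exists v; rewrite ?mem_enum //.
      by apply/mapP; exists c; rewrite // mem_enum E.
    by move=> _ [<-|[]] _ /=; rewrite s'v.
  + move=> s'v; apply: supported_by_inertia; first by rewrite /= s'v.
    apply/In_mem; rewrite !mem_cat; apply/orP; left.
    apply/allpairsPdep; exists v, (fluent_val s (fvar v)).
    by rewrite mem_enum fluent_val_fdom.
- have := fire_marked fired (safe p).
  case: ifP => [cons | _]; [|case: ifP => [prod | _]] => s'p.
  + apply: (by_action (vb false) [::]) => //; first by rewrite /= s'p.
    rewrite !mem_cat; apply/orP; left.
    by apply/mapP; exists p; rewrite // mem_filter cons mem_enum.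
  + apply: (by_action (vb true) [::]) => //; first by rewrite /= s'p.
    rewrite !mem_cat; apply/orP; right; apply/orP; left.
    by apply/mapP; exists p; rewrite // mem_filter prod mem_enum.
  + apply: supported_by_inertia; first by rewrite /= s'p.
    apply/In_mem; rewrite !mem_cat; apply/orP; right; apply/orP; left.
    apply/allpairsPdep; exists p, (0 < s.1 p).
    by rewrite mem_enum; split=> //; case: (0 < _).
- apply: (by_action (vb true) [::]) => //.
  by rewrite !mem_cat; do 7 (apply/orP; right); apply/orP; left; rewrite mem_seq1.
Qed.

End Encoding.

Section Run.
Variables (V C Dom P T : finType) (W : dawnet V C Dom P T).
Variables (l : nat) (st : nat -> state V C P) (ts : nat -> T).
Variable ngd : T -> option (seq (seq (dlit V C))).

Local Notation S := (trajectory_lits (bc W ngd) l (fun i => fluent_val (st i)) ts).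

Lemma Phi_union_trajectory x : Phi_union W st ts l x <-> S x.
Proof.
split.
- case=> j [jl [nu | [jl' [-> | [t [ne ->]]]]]]; [| by split | by split].
  case: nu => [[p [pos [->|->]]] | [[p [zero [->|->]]] | [[v [o [eo [->|->]]]] |
    [[v [ev ->]] | [[v [o [oadm [ne ->]]]] | [->|->]]]]]] /=;
    rewrite ?pos ?zero ?eo ?ev ?in_cons ?eqxx ?orbT //.
  split=> //; first exact: vc_in_fdom.
  by case: ((st j).2 v) ne => [c|] // ne; apply: contra ne => /eqP[->].
- case: x => [[i f x|i a]|[i f x|i a]] /=.
  - case=> il ->; exists i; split=> //; left; case: f => [v|[p|[]]] /=.
    + case E: ((st i).2 v) => [c|].
        by do 2 right; left; exists v, c; split=> //; left.
      by do 3 right; left; exists v.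
    + case: (posnP ((st i).1 p)) => [zero|pos].
        by right; left; exists p; split=> //; left.
      by left; exists p; split=> //; left.
    + by do 5 right; left.
  - by case=> il ->; exists i; split; [apply: ltnW | right; split=> //; left].
  - case=> il xf ne; exists i; split=> //; left; case: f xf ne => [v|[p|[]]] /=.
    + rewrite in_cons => /orP[/eqP-> | /mapP[o oadm ->]].
        case E: ((st i).2 v) => [c|]; last by rewrite eqxx.
        by do 2 right; left; exists v, c; split=> //; right.
      move=> ne; do 4 right; left; exists v, o; rewrite mem_enum in oadm.
      by case: ((st i).2 v) ne => [c|] // ne; do !split=> //; apply: contra ne => /eqP[->].
    + rewrite !in_cons orbF => /orP[] /eqP->; case: (posnP ((st i).1 p)) => [zero|pos];
        rewrite ?eqxx // => _.
        by right; left; exists p; split=> //; right.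
      by left; exists p; split=> //; right.
    + by rewrite !in_cons orbF => /orP[] /eqP-> // _; do 6 right.
  - by case=> il ne; exists i; split; [apply: ltnW | right; split=> //; right; exists a].
Qed.

Hypothesis hrun : run W st ts l.

Lemma run_fire i : i < l -> fire W (st i) (ts i) (st i.+1).
Proof. exact: hrun.2. Qed.

Lemma run_one_safe i : one_safe W -> i <= l -> forall p, (st i).1 p <= 1.
Proof.
move=> safe il p; apply: safe; exists st, ts, i; split=> //; split; first exact: hrun.1.
by move=> j ji; apply: run_fire (leq_trans ji il).
Qed.

Lemma run_adm i v c : i <= l -> (st i).2 v = Some c -> c \in adm W v.
Proof.
elim: i => [|i IH] il; first by rewrite hrun.1.
have := fire_var v (run_fire il); case E: (wr W (ts i) v) => [w|]; last first.
  by move=> ->; apply/IH/ltnW.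
case: ifP => [_ -> // | _ [c' cw ->] [<-]].
by apply/bigcupP; exists (ts i); rewrite ?E.
Qed.

End Run.

Theorem mainTheorem4 (V C Dom P T : finType) (W : dawnet V C Dom P T)
  (ngd : T -> option (seq (seq (dlit V C))))
  (hW : dawnet_wf W) (hsafe : one_safe W) (hngd : neg_guard_choice W ngd)
  (l : nat) (st : nat -> state V C P) (ts : nat -> T)
  (hrun : run W st ts l) :
  stable_model (prog (bc W ngd) l) (Phi_union W st ts l).
Proof.
have safe i : i <= l -> forall p, (st i).1 p <= 1.
  exact: (run_one_safe hrun hsafe).
have adm_vals i : i <= l -> forall v c, (st i).2 v = Some c -> c \in adm W v.
  by move=> il v c; apply: (run_adm hrun il).
have ok i : i <= l -> assignment_ok (dmod W) (st i).2.
  by move=> il v c /(adm_vals i il); apply: adm_subset_Delta.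
apply: (stable_model_ext (fun x => iff_sym (Phi_union_trajectory W l st ts ngd x))).
apply: trajectory_lits_stable.
- by move=> i f il; apply/fluent_val_fdom/adm_vals.
- by [].
- move=> law i law_in il; have il' := ltnW il.
  exact: (bc_dynamic_law_holds hngd (run_fire hrun il) (safe i il') (ok i il') law_in).
- by move=> f x /bc_init_holds; rewrite hrun.1.
- move=> i f il; have il' := ltnW il.
  exact: (bc_fire_supported ngd f (run_fire hrun il) (safe i il') (adm_vals i il')).
Qed.
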